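(* Let $\Phi$ be a Young function, $\varphi\in\mathcal{G}^{\rm dec}_1$, and let $\psi:\mathbb{R}^n\to\mathbb{R}^n$ be measurable. Then $C_\psi$ is bounded on the weak Orlicz–Morrey space $\mathrm{w}\mathcal{M}_\Phi^\varphi(\mathbb{R}^n)$ if and only if there exists a constant $K>0$ such that for all measurable sets $A\subset\mathbb{R}^n$, \[ \|\chi_{\psi^{-1}(A)}\|_{\mathcal{M}_\Phi^\varphi}\le K\|\chi_A\|_{\mathcal{M}_\Phi^\varphi}. \]
   Context: A Young function is a convex $\Phi:[0,\infty)\to[0,\infty)$ with $\Phi(0)=0$, $\lim_{t\to\infty}\Phi(t)=\infty$. $\mathcal{G}^{\rm dec}_1$ is the set of $\varphi:(0,\infty)\to(0,\infty)$ that are almost decreasing (there is $C>0$ with $C\varphi(r)\ge\varphi(s)$ for $r<s$) and submultiplicative (there is $C>0$ with $\varphi(rs)\le C\varphi(r)\varphi(s)$). For a ball $B=B(a,r)$: $\|f\|_{\Phi,B}=\inf\{\lambda>0:\frac1{|B|}\int_B\Phi(|f|/\lambda)\le1\}$ and $\|f\|_{\mathcal{M}_\Phi^\varphi}=\sup_{a,r}\frac1{\varphi(r)}\|f\|_{\Phi,B(a,r)}$. For measurable $A$, $f$ and $t>0$, $m(A,f,t)=|\{x\in A:|f(x)|>t\}|$. Define $\|f\|_{\Phi,B,\mathrm{weak}}=\inf\{\lambda>0:\sup_{t>0}\frac1{|B|}\Phi(t)\,m(B,f/\lambda,t)\le1\}$ and $\mathrm{w}\mathcal{M}_\Phi^\varphi(\mathbb{R}^n)$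 as the set of measurable $f$ with $\|f\|_{\mathrm{w}\mathcal{M}_\Phi^\varphi}=\sup_{a\in\mathbb{R}^n,r>0}\frac1{\varphi(r)}\|f\|_{\Phi,B(a,r),\mathrm{weak}}<\infty$. $\chi_A$ is the characteristic function of $A$ and $C_\psi f=f\circ\psi$. *)

(* R^n is modelled as 'rV[R]_n. *)
From HB Require Import structures.
From mathcomp Require Import all_boot all_order all_algebra.
From mathcomp Require Import all_classical all_reals all_analysis.
Set Implicit Arguments. Unset Strict Implicit. Unset Printing Implicit Defensive.
Import Order.TTheory GRing.Theory Num.Theory.
Local Open Scope classical_set_scope.
Local Open Scope ring_scope.

(* Lebesgue measure on R^n, built as the Caratheodory restriction of   *)
(* the Lebesgue outer measure                                          *)
(*   lambda^*(X) = inf { sum_k vol(Q_k) | X \subset \bigcup_k Q_k }    *)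
(* where the Q_k are half-open boxes [a,b) = prod_i [a_i, b_i).        *)
(* Technically: on a copy of 'rV[R]_n with the discrete sigma-algebra, *)
(* the set function [box_content] is vol(Q) on boxes Q, 0 on set0 and  *)
(* +oo on non-box sets; its library extension [mu_ext] (inf over      *)
(* countable covers) is exactly the Lebesgue outer measure.            *)

Definition Rdisc (R : realType) (n : nat) : Type := 'rV[R]_n.
HB.instance Definition _ R n := Choice.on (Rdisc R n).
HB.instance Definition _ R n := isPointed.Build (Rdisc R n) (0 : 'rV[R]_n).
HB.instance Definition _ R n := @isMeasurable.Build default_measure_display
  (Rdisc R n) discrete_measurable discrete_measurable0
  (@discrete_measurableC _) (@discrete_measurableU _).

Definition boxset (R : realType) (n : nat) (a b : 'rV[R]_n) : set (Rdisc R n) :=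
  [set x : 'rV[R]_n | forall i : 'I_n, a ord0 i <= x ord0 i < b ord0 i].

Definition boxvol (R : realType) (n : nat) (a b : 'rV[R]_n) : R :=
  \prod_(i < n) Num.max 0 (b ord0 i - a ord0 i).

Definition box_content (R : realType) (n : nat) (A : set (Rdisc R n)) : \bar R :=
  if `[< A = set0 >] then 0%E
  else ereal_inf [set v | exists a b : 'rV[R]_n, A = boxset a b /\ v = (boxvol a b)%:E].

Lemma box_content0 (R : realType) (n : nat) : box_content (set0 : set (Rdisc R n)) = 0%E.
Proof. by rewrite /box_content asboolT. Qed.

Lemma box_content_ge0 (R : realType) (n : nat) (A : set (Rdisc R n)) :
  (0 <= box_content A)%E.
Proof.
rewrite /box_content; case: asboolP => _ //.
apply: le_ereal_inf_tmp => _ [a [b [_ ->]]]; rewrite lee_fin /boxvol.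
by apply: prodr_ge0 => i _; rewrite le_max lexx.
Qed.

Definition lebesgue_outer (R : realType) (n : nat) : set (Rdisc R n) -> \bar R :=
  mu_ext (@box_content R n).

HB.instance Definition _ (R : realType) (n : nat) :=
  isOuterMeasure.Build R (Rdisc R n) (@lebesgue_outer R n)
    (mu_ext0 (@box_content0 R n) (@box_content_ge0 R n))
    (mu_ext_ge0 (@box_content_ge0 R n))
    (le_mu_ext (@box_content R n))
    (mu_ext_sigma_subadditive (@box_content_ge0 R n)).

Definition LRn (R : realType) (n : nat) := caratheodory_type (@lebesgue_outer R n).

Definition leb (R : realType) (n : nat) : set (LRn R n) -> \bar R :=
  (@lebesgue_outer R n : set (caratheodory_type (@lebesgue_outer R n)) -> \bar R).

Definition ball_n (R : realType) (n : nat) (a : 'rV[R]_n) (r : R) : set (LRn R n) :=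
  [set y : 'rV[R]_n | \sum_(i < n) (y ord0 i - a ord0 i) ^+ 2 < r ^+ 2].

(* Phi : [0,oo) -> [0,oo) (values on negative reals are irrelevant) *)
Definition young_function (R : realType) (Phi : R -> R) : Prop :=
  [/\ (forall t, 0 <= t -> 0 <= Phi t),
      (forall x y s, 0 <= x -> 0 <= y -> 0 <= s <= 1 ->
         Phi (s * x + (1 - s) * y) <= s * Phi x + (1 - s) * Phi y),
      Phi 0 = 0 &
      Phi t @[t --> +oo] --> +oo].

(* phi : (0,oo) -> (0,oo) (values on non-positive reals are irrelevant) *)
Definition G_dec_1 (R : realType) (phi : R -> R) : Prop :=
  [/\ (forall r, 0 < r -> 0 < phi r),
      (exists C, 0 < C /\ forall r s, 0 < r -> r < s -> phi s <= C * phi r) &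
      (exists C, 0 < C /\ forall r s, 0 < r -> 0 < s ->
                      phi (r * s) <= C * phi r * phi s)].

Local Open Scope ereal_scope.

Definition orlicz_ball_norm (R : realType) (n : nat) (Phi : R -> R)
    (f : LRn R n -> R) (B : set (LRn R n)) : \bar R :=
  ereal_inf [set l%:E | l in [set l : R | (0 < l)%R /\
    ((fine (leb B))^-1)%:E * \int[leb (R:=R) (n:=n)]_(x in B) (Phi (Num.norm (f x) / l)%R)%:E
      <= 1]].

Definition morrey_norm (R : realType) (n : nat) (Phi phi : R -> R)
    (f : LRn R n -> R) : \bar R :=
  ereal_sup [set ((phi r)^-1)%:E * orlicz_ball_norm Phi f (ball_n a r)
             | a in [set: 'rV[R]_n] & r in [set r : R | (0 < r)%R]].

Definition distrib (R : realType) (n : nat) (A : set (LRn R n))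
    (f : LRn R n -> R) (t : R) : \bar R :=
  leb (A `&` [set x | (t < Num.norm (f x))%R]).

Definition weak_orlicz_ball_norm (R : realType) (n : nat) (Phi : R -> R)
    (f : LRn R n -> R) (B : set (LRn R n)) : \bar R :=
  ereal_inf [set l%:E | l in [set l : R | (0 < l)%R /\
    ereal_sup [set ((fine (leb B))^-1 * Phi t)%:E * distrib B (fun x => (f x / l)%R) t
               | t in [set t : R | (0 < t)%R]] <= 1]].

Definition weak_morrey_norm (R : realType) (n : nat) (Phi phi : R -> R)
    (f : LRn R n -> R) : \bar R :=
  ereal_sup [set ((phi r)^-1)%:E * weak_orlicz_ball_norm Phi f (ball_n a r)
             | a in [set: 'rV[R]_n] & r in [set r : R | (0 < r)%R]].

Definition weak_morrey_space (R : realType) (n : nat) (Phi phi : R -> R) :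
    set (LRn R n -> R) :=
  [set f | measurable_fun [set: LRn R n] f /\ weak_morrey_norm Phi phi f < +oo].

Definition composition_bounded (R : realType) (n : nat) (Phi phi : R -> R)
    (psi : LRn R n -> LRn R n) : Prop :=
  exists C : R, (0 < C)%R /\
    forall f, weak_morrey_space Phi phi f ->
      weak_morrey_space Phi phi (f \o psi) /\
      weak_morrey_norm Phi phi (f \o psi) <= C%:E * weak_morrey_norm Phi phi f.

From mathcomp Require Import all_boot all_order all_algebra.
From mathcomp Require Import all_classical all_reals all_analysis.
From mathcomp Require Import lra measurable_realfun.

(* Everything rests on a layer-cake formula for the weak norm: for measurable f,
   ||f||_{Phi,B,weak} = sup_{s>0} s ||chi_{|f|>s}||_{Phi,B},
   because both sides are the infimum of the l > 0 such that
   Phi(s/l) |{|f| > s} n B| <= |B| for every s > 0 (Phi is nondecreasing, being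
   convex with Phi(0) = 0).  Taking suprema over balls gives
   ||f||_{wM} = sup_{s>0} s ||chi_{|f|>s}||_M, in particular
   ||chi_E||_{wM} = ||chi_E||_M.  As {|f o psi| > s} = psi^-1 {|f| > s}, a bound
   for C_psi on indicators is the same as a bound on the whole weak space. *)
Import Order.TTheory GRing.Theory Num.Theory.
Local Open Scope classical_set_scope.
Local Open Scope ring_scope.

Section measurable_balls.
Variables (R : realType) (n : nat).

Definition halfspace (i : 'I_n) (c : R) : set (Rdisc R n) :=
  [set x : 'rV[R]_n | x ord0 i < c].

Definition box_cut_above (i : 'I_n) (c : R) (b : 'rV[R]_n) : 'rV[R]_n :=
  \row_j (if j == i then Num.min (b ord0 i) c else b ord0 j).

Definition box_cut_below (i : 'I_n) (c : R) (a : 'rV[R]_n) : 'rV[R]_n :=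
  \row_j (if j == i then Num.max (a ord0 i) c else a ord0 j).

Lemma boxvol_ge0 (a b : 'rV[R]_n) : 0 <= boxvol a b.
Proof. by apply: prodr_ge0 => i _; rewrite le_max lexx. Qed.

Lemma box_content_boxset (a b : 'rV[R]_n) :
  (box_content (boxset a b) <= (boxvol a b)%:E)%E.
Proof.
rewrite /box_content; case: asboolP => _; first by rewrite lee_fin boxvol_ge0.
by apply: ereal_inf_lbound; exists a, b.
Qed.

Lemma interval_length_split (a b c : R) :
  Num.max 0 (Num.min b c - a) + Num.max 0 (b - Num.max a c) = Num.max 0 (b - a).
Proof. by rewrite !maxEle !minEle; repeat case: ifP; move=> *; lra. Qed.

Lemma boxvol_split i c (a b : 'rV[R]_n) :
  boxvol a (box_cut_above i c b) + boxvol (box_cut_below i c a) b = boxvol a b.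
Proof.
rewrite /boxvol (bigD1 i) //= [X in _ + X](bigD1 i) // [X in _ = X](bigD1 i) //=.
rewrite !mxE !eqxx -[in RHS](interval_length_split _ _ c) mulrDl.
congr (_ * _ + _ * _).
  by apply: eq_bigr => j /negbTE ji; rewrite !mxE ji.
by apply: eq_bigr => j /negbTE ji; rewrite !mxE ji.
Qed.

Lemma boxsetI_halfspace i c (a b : 'rV[R]_n) :
  boxset a b `&` halfspace i c = boxset a (box_cut_above i c b).
Proof.
apply/seteqP; split => x /=.
  move=> [x_ab xc] j; rewrite !mxE; case: ifP => [/eqP ->|_]; last exact: x_ab.
  by have /andP[-> xb] := x_ab i; rewrite lt_min xb xc.
move=> x_ab; split; last first.
  by have := x_ab i; rewrite !mxE eqxx lt_min => /andP[_ /andP[]].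
move=> j; have := x_ab j; rewrite !mxE; case: ifP => [/eqP ->|_] //.
by rewrite lt_min => /andP[-> /andP[]].
Qed.

Lemma boxsetIC_halfspace i c (a b : 'rV[R]_n) :
  boxset a b `&` ~` halfspace i c = boxset (box_cut_below i c a) b.
Proof.
apply/seteqP; split => x /=.
  move=> [x_ab /negP]; rewrite -leNgt => cx j.
  rewrite !mxE; case: ifP => [/eqP ->|_]; last exact: x_ab.
  by have /andP[ax ->] := x_ab i; rewrite ge_max ax cx.
move=> x_ab; split; last first.
  by have := x_ab i; rewrite !mxE eqxx ge_max => /andP[/andP[_ cx] _]; apply/negP; rewrite -leNgt.
move=> j; have := x_ab j; rewrite !mxE; case: ifP => [/eqP ->|_] //.
by rewrite ge_max => /andP[/andP[-> _] ->].
Qed.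

Lemma box_content_halfspace_split i c (F : set (Rdisc R n)) :
  (box_content (F `&` halfspace i c) + box_content (F `&` ~` halfspace i c)
    <= box_content F)%E.
Proof.
rewrite [leRHS]/box_content; case: asboolP => [->|_].
  by rewrite !set0I box_content0 adde0.
apply: le_ereal_inf_tmp => _ [a [b [-> ->]]].
rewrite boxsetI_halfspace boxsetIC_halfspace -(boxvol_split i c) EFinD.
by apply: leeD; apply: box_content_boxset.
Qed.

(* A half-space cuts every box into two boxes whose volumes add up, which is the
   Caratheodory criterion for the outer measure generated by boxes. *)
Lemma halfspace_caratheodory i c :
  (@lebesgue_outer R n).-caratheodory (halfspace i c).
Proof.
apply: le_caratheodory_measurable => X.
change (lebesgue_outer (X `&` halfspace i c) + lebesgue_outer (X `&` ~` halfspace i c)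
  <= mu_ext (@box_content R n) X)%E.
apply: le_ereal_inf_tmp => _ [F [_ XF] <-].
apply: (@le_trans _ _ (\sum_(k <oo) box_content (F k `&` halfspace i c) +
                       \sum_(k <oo) box_content (F k `&` ~` halfspace i c))%E).
  apply: leeD; apply: ereal_inf_lbound.
    by exists (fun k => F k `&` halfspace i c) => //; split=> // x [/XF[k _ ?] ?]; exists k.
  by exists (fun k => F k `&` ~` halfspace i c) => //; split=> // x [/XF[k _ ?] ?]; exists k.
rewrite -nneseriesD; [|by move=> *; apply: box_content_ge0..].
apply: lee_nneseries => [k _ _|k _]; last exact: box_content_halfspace_split.
by apply: adde_ge0; apply: box_content_ge0.
Qed.

Lemma measurable_coord (i : 'I_n) :
  measurable_fun [set: LRn R n] (fun x : LRn R n => (x : 'rV[R]_n) ord0 i).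
Proof.
apply: (measurability _ (RGenInftyO.measurableE R)) => //.
move=> _ [_ [c ->] <-]; rewrite setTI.
have -> : (fun x : LRn R n => (x : 'rV[R]_n) ord0 i) @^-1` `]-oo, c[ = halfspace i c.
  by apply/seteqP; split => x /=; rewrite in_itv.
exact: halfspace_caratheodory.
Qed.

Lemma measurable_ball_n (a : 'rV[R]_n) (r : R) : measurable (ball_n a r).
Proof.
have msq : measurable_fun [set: LRn R n]
    (fun y : LRn R n => \sum_(i < n) ((y : 'rV[R]_n) ord0 i - a ord0 i) ^+ 2).
  apply: measurable_sum => i; apply: measurable_funX.
  by apply: measurable_funB; [exact: measurable_coord | exact: measurable_cst].
by have := msq measurableT _ (measurable_itv `]-oo, r ^+ 2[); rewrite setTI.
Qed.

End measurable_balls.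

Lemma young_function_le (R : realType) (Phi : R -> R) (x y : R) :
  young_function Phi -> 0 <= x -> x <= y -> Phi x <= Phi y.
Proof.
case=> Phi_ge0 Phi_convex Phi0 _ x0.
have [-> x_le0|y0 xy] := eqVneq y 0.
  by have -> : x = 0 by apply/le_anti; rewrite x0 x_le0.
have y_gt0 : 0 < y by rewrite lt_neqAle eq_sym y0 (le_trans x0 xy).
have s01 : 0 <= x / y <= 1.
  by rewrite divr_ge0 ?(ltW y_gt0) //= ler_pdivrMr // mul1r.
have := Phi_convex y 0 (x / y) (ltW y_gt0) (lexx 0) s01.
rewrite Phi0 !mulr0 !addr0 divfK ?gt_eqF // => /le_trans; apply.
by apply: ler_piMl; [exact: Phi_ge0 (ltW y_gt0) | case/andP: s01].
Qed.

Section orlicz_morrey_levels.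
Variables (R : realType) (n : nat) (Phi phi : R -> R).
Hypothesis young_Phi : young_function Phi.
Hypothesis phi_gt0 : forall r : R, 0 < r -> 0 < phi r.

Local Notation LT := (LRn R n).
Let lebO : {outer_measure set Rdisc R n -> \bar R} := lebesgue_outer (R:=R) (n:=n).
Let lebM : measure LT R := (lebO : set (caratheodory_type lebO) -> \bar R).

Let Phi_ge0 t : (0 <= t)%R -> (0 <= Phi t)%R. Proof. by case: young_Phi => + _ _ _; apply. Qed.
Let Phi0 : Phi 0 = 0. Proof. by case: young_Phi. Qed.

Definition superlevel (f : LT -> R) (s : R) : set LT := [set x | s < `|f x|].

Definition orlicz_indic_admissible (B E : set LT) (l : R) : Prop :=
  (((fine (leb B))^-1)%:E * ((Phi l^-1)%:E * leb (E `&` B)) <= 1)%E.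

Local Open Scope ereal_scope.

Lemma measurable_superlevel (f : LT -> R) s :
  measurable_fun [set: LT] f -> measurable (superlevel f s).
Proof.
move=> mf; have := (measurableT_comp (@normr_measurable R setT) mf) measurableT _
  (measurable_itv `]s, +oo[).
by rewrite setTI; congr measurable; apply/seteqP; split => x /=; rewrite in_itv /= andbT.
Qed.

Lemma integral_Phi_indic (E B : set LT) (l : R) :
  measurable E -> measurable B -> (0 < l)%R ->
  \int[leb (R:=R) (n:=n)]_(x in B) (Phi (`|(\1_E : LT -> R) x| / l))%:E =
  (Phi l^-1)%:E * leb (E `&` B).
Proof.
move=> mE mB l0.
transitivity (\int[lebM]_(x in B) ((Phi l^-1)%:E * (\1_E x)%:E)).
  apply: (@eq_integral _ _ _ lebM) => x _; rewrite /indic.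
  by case: (x \in E); rewrite /= ?normr1 ?normr0 ?mul1r ?mul0r ?Phi0 (mule1, mule0).
rewrite ge0_integralZl_EFin ?integral_indic //.
- by apply/measurable_EFinP; apply: measurable_indic.
- by apply: Phi_ge0; rewrite invr_ge0 ltW.
Qed.

Lemma orlicz_ball_norm_indic (E B : set LT) : measurable E -> measurable B ->
  orlicz_ball_norm Phi (\1_E : LT -> R) B =
  ereal_inf [set l%:E | l in [set l | (0 < l)%R /\ orlicz_indic_admissible B E l]].
Proof.
move=> mE mB; congr ereal_inf; apply/seteqP; split => _ [l [l0 hl] <-];
  by exists l => //; split => //; move: hl; rewrite integral_Phi_indic.
Qed.

Lemma orlicz_ball_norm_ge0 (f : LT -> R) B : 0 <= orlicz_ball_norm Phi f B.
Proof. by apply: le_ereal_inf_tmp => _ [l [l0 _] <-]; rewrite lee_fin ltW. Qed.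

Lemma orlicz_indic_admissible_le B E (l l' : R) : (0 < l)%R -> (l <= l')%R ->
  orlicz_indic_admissible B E l -> orlicz_indic_admissible B E l'.
Proof.
move=> l0 ll'; apply: le_trans; apply: lee_wpmul2l.
  by rewrite lee_fin invr_ge0 fine_ge0 // (measure_ge0 lebM).
apply: lee_wpmul2r; first exact: (measure_ge0 lebM).
rewrite lee_fin; apply: young_function_le => //; first by rewrite invr_ge0 ltW // (lt_le_trans l0).
by rewrite lef_pV2 // ?posrE // (lt_le_trans l0).
Qed.

Lemma distrib_scale B (f : LT -> R) (lam t : R) : (0 < lam)%R ->
  distrib B (fun x => f x / lam)%R t = leb (superlevel f (lam * t) `&` B).
Proof.
move=> lam0; rewrite /distrib setIC; congr (leb (_ `&` _)).
by apply/seteqP; split => x /=; rewrite normrM normfV (gtr0_norm lam0) ltr_pdivlMr // mulrC.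
Qed.

Lemma weak_orlicz_admissibleE B (f : LT -> R) (lam : R) : (0 < lam)%R ->
  ereal_sup [set ((fine (leb B))^-1 * Phi t)%:E * distrib B (fun x => f x / lam)%R t
             | t in [set t : R | (0 < t)%R]] <= 1 <->
  (forall s, (0 < s)%R -> orlicz_indic_admissible B (superlevel f s) (lam / s)).
Proof.
move=> lam0; split => [le_sup1 s s0|admissible].
  apply: le_trans le_sup1; apply: ereal_sup_ubound; exists (s / lam)%R; first exact: divr_gt0.
  by rewrite distrib_scale // mulrCA divff ?gt_eqF // mulr1 invf_div EFinM muleA.
apply: ge_ereal_sup => _ [t t0 <-]; have := admissible _ (mulr_gt0 lam0 t0).
by rewrite /orlicz_indic_admissible -distrib_scale // invf_div mulrC mulKf ?gt_eqF // EFinM muleA.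
Qed.

Lemma weak_orlicz_ball_normE (f : LT -> R) B :
  measurable_fun [set: LT] f -> measurable B ->
  weak_orlicz_ball_norm Phi f B =
  ereal_sup [set s%:E * orlicz_ball_norm Phi (\1_(superlevel f s) : LT -> R) B
             | s in [set s : R | (0 < s)%R]].
Proof.
move=> mf mB; set X := ereal_sup _.
have level_le_X s : (0 < s)%R ->
    s%:E * orlicz_ball_norm Phi (\1_(superlevel f s) : LT -> R) B <= X.
  by move=> s0; apply: ereal_sup_ubound; exists s.
have X0 : 0 <= X by apply: le_trans (level_le_X _ ltr01); rewrite mul1e orlicz_ball_norm_ge0.
apply/le_anti/andP; split; last first.
  apply: ge_ereal_sup => _ [s s0 <-].
  rewrite orlicz_ball_norm_indic //; last exact: measurable_superlevel.
  apply: le_ereal_inf_tmp => _ [lam [lam0 weak_lam] <-].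
  rewrite -lee_pdivlMl // -EFinM; apply: ereal_inf_lbound.
  exists (s^-1 * lam)%R => //; split; first by rewrite mulr_gt0 // invr_gt0.
  by rewrite mulrC; exact: (weak_orlicz_admissibleE B f _ lam0).1 weak_lam s s0.
case: X X0 level_le_X => [x| |] // x0 level_le_x; last exact: leey.
apply/lee_addgt0Pr => e e0; rewrite -EFinD.
have lam0 : (0 < x + e)%R by move: x0; rewrite lee_fin; lra.
apply: ereal_inf_lbound; exists (x + e)%R => //; split => //.
apply/(weak_orlicz_admissibleE B f _ lam0) => s s0.
have := level_le_x s s0; rewrite orlicz_ball_norm_indic //; last exact: measurable_superlevel.
rewrite -lee_pdivlMl // => le_inf.
have lt_xe : (s^-1)%:E * x%:E < ((x + e) / s)%:E.
  by rewrite -EFinM lte_fin mulrC ltr_pM2r ?invr_gt0 // ltrDl.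
have /ereal_inf_lt[_ [l [l0 hl] <-]] := le_lt_trans le_inf lt_xe.
by rewrite lte_fin => /ltW le_l; apply: orlicz_indic_admissible_le l0 le_l hl.
Qed.

Lemma weak_morrey_normE (f : LT -> R) : measurable_fun [set: LT] f ->
  weak_morrey_norm Phi phi f =
  ereal_sup [set s%:E * morrey_norm Phi phi (\1_(superlevel f s) : LT -> R)
             | s in [set s : R | (0 < s)%R]].
Proof.
move=> mf; have ball_le_morrey a r : (0 < r)%R -> forall g : LT -> R,
    ((phi r)^-1)%:E * orlicz_ball_norm Phi g (ball_n a r) <= morrey_norm Phi phi g.
  by move=> r0 g; apply: ereal_sup_ubound; exists a => //; exists r.
apply/le_anti/andP; split.
  apply: ge_ereal_sup => _ [a _ [r r0 <-]].
  rewrite lee_pdivrMl ?phi_gt0 // weak_orlicz_ball_normE //; last exact: measurable_ball_n.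
  apply: ge_ereal_sup => _ [s s0 <-]; rewrite -lee_pdivrMl ?phi_gt0 // muleCA.
  apply: (@le_trans _ _ (s%:E * morrey_norm Phi phi (\1_(superlevel f s) : LT -> R))).
    by apply: lee_wpmul2l; [rewrite lee_fin ltW | exact: ball_le_morrey].
  by apply: ereal_sup_ubound; exists s.
apply: ge_ereal_sup => _ [s s0 <-]; rewrite -lee_pdivlMl //.
apply: ge_ereal_sup => _ [a _ [r r0 <-]]; rewrite lee_pdivlMl // muleCA.
apply: (@le_trans _ _ (((phi r)^-1)%:E * weak_orlicz_ball_norm Phi f (ball_n a r))).
  apply: lee_wpmul2l; first by rewrite lee_fin invr_ge0 ltW ?phi_gt0.
  rewrite weak_orlicz_ball_normE //; last exact: measurable_ball_n.
  by apply: ereal_sup_ubound; exists s.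
by apply: ereal_sup_ubound; exists a => //; exists r.
Qed.

Lemma morrey_norm_ge0 (f : LT -> R) : 0 <= morrey_norm Phi phi f.
Proof.
apply: (@le_trans _ _ (((phi 1)^-1)%:E * orlicz_ball_norm Phi f (ball_n 0 1))).
  by apply: mule_ge0; [rewrite lee_fin invr_ge0 ltW ?phi_gt0 | exact: orlicz_ball_norm_ge0].
by apply: ereal_sup_ubound; exists 0%R => //; exists 1%R => //; exact: ltr01.
Qed.

Lemma morrey_norm_indic0 : morrey_norm Phi phi (\1_(set0 : set LT) : LT -> R) = 0.
Proof.
apply/le_anti; rewrite morrey_norm_ge0 andbT; apply: ge_ereal_sup => _ [a _ [r _ <-]].
rewrite orlicz_ball_norm_indic //; last exact: measurable_ball_n.
suff -> : ereal_inf [set l%:E | l in [set l | (0 < l)%R /\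
            orlicz_indic_admissible (ball_n a r) set0 l]] = 0 by rewrite mule0.
apply/le_anti; rewrite le_ereal_inf_tmp ?andbT; last first.
  by move=> _ [l [l0 _] <-]; rewrite lee_fin ltW.
apply/lee_addgt0Pr => e e0; rewrite add0e; apply: ereal_inf_lbound; exists e => //.
have leb0 : leb (set0 : set LT) = 0 := measure0 lebM.
by split => //; rewrite /orlicz_indic_admissible set0I leb0 !mule0 lee01.
Qed.

Lemma superlevel_indic_lt1 (E : set LT) (s : R) : (0 <= s < 1)%R ->
  superlevel (\1_E : LT -> R) s = E.
Proof.
case/andP=> s0 s1; apply/seteqP; split => x; rewrite /superlevel /indic /=.
  by case: (x \in E)/boolP => [/set_mem //|_]; rewrite normr0 ltNge s0.
by move=> /mem_set ->; rewrite normr1.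
Qed.

Lemma superlevel_indic_ge1 (E : set LT) (s : R) : (1 <= s)%R ->
  superlevel (\1_E : LT -> R) s = set0.
Proof.
move=> s1; apply/seteqP; split => x //; rewrite /superlevel /indic /=.
by case: (x \in E); rewrite ?normr1 ?normr0 ltNge ?s1 // (le_trans ler01 s1).
Qed.

Lemma weak_morrey_norm_indic (E : set LT) : measurable E ->
  weak_morrey_norm Phi phi (\1_E : LT -> R) = morrey_norm Phi phi (\1_E : LT -> R).
Proof.
move=> mE; rewrite weak_morrey_normE; last exact: measurable_indic.
apply/le_anti/andP; split.
  apply: ge_ereal_sup => _ [s s0 <-]; have [s1|s1] := ltP s 1%R.
    rewrite superlevel_indic_lt1 ?(ltW s0) ?s1 //.
    by apply: gee_pMl; [|exact: morrey_norm_ge0|rewrite lee_fin ltW].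
  by rewrite superlevel_indic_ge1 // morrey_norm_indic0 mule0 morrey_norm_ge0.
have below_sup s : (0 < s < 1)%R -> s%:E * morrey_norm Phi phi (\1_E : LT -> R) <= ereal_sup
    [set s%:E * morrey_norm Phi phi (\1_(superlevel (\1_E : LT -> R) s) : LT -> R)
     | s in [set s : R | (0 < s)%R]].
  case/andP=> s0 s1; apply: ereal_sup_ubound; exists s; first exact: s0.
  by rewrite superlevel_indic_lt1 // (ltW s0).
(* generalizing the supremum keeps lee_mul01Pr from unfolding it during unification *)
move: below_sup; move: (ereal_sup _) => X below_sup.
by apply/lee_mul01Pr; [exact: morrey_norm_ge0 | exact: below_sup].
Qed.

Definition morrey_preimage_bounded (psi : LT -> LT) : Prop :=
  exists K : R, (0 < K)%R /\ forall A : set LT, measurable A ->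
    morrey_norm Phi phi (\1_(psi @^-1` A) : LT -> R)
      <= K%:E * morrey_norm Phi phi (\1_A : LT -> R).

Lemma weak_morrey_norm_comp_le (psi : LT -> LT) (K : R) (f : LT -> R) :
  measurable_fun [set: LT] psi -> measurable_fun [set: LT] f -> (0 <= K)%R ->
  (forall A : set LT, measurable A ->
    morrey_norm Phi phi (\1_(psi @^-1` A) : LT -> R)
      <= K%:E * morrey_norm Phi phi (\1_A : LT -> R)) ->
  weak_morrey_norm Phi phi (f \o psi) <= K%:E * weak_morrey_norm Phi phi f.
Proof.
move=> mpsi mf K0 preimage_le.
rewrite (weak_morrey_normE _ mf) (weak_morrey_normE _ (measurableT_comp mf mpsi)).
apply: ge_ereal_sup => _ [s s0 <-].
have -> : superlevel (f \o psi) s = psi @^-1` superlevel f s by [].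
apply: (@le_trans _ _ (s%:E * (K%:E * morrey_norm Phi phi (\1_(superlevel f s) : LT -> R)))).
  apply: lee_wpmul2l; first by rewrite lee_fin ltW.
  exact: preimage_le _ (measurable_superlevel _ _ mf).
rewrite muleCA; apply: lee_wpmul2l; first by rewrite lee_fin.
by apply: ereal_sup_ubound; exists s.
Qed.

Lemma composition_bounded_preimage (psi : LT -> LT) :
  measurable_fun [set: LT] psi ->
  composition_bounded Phi phi psi -> morrey_preimage_bounded psi.
Proof.
move=> mpsi [C [C0 bounded]]; exists C; split => // A mA.
have [->|MA_fin] := eqVneq (morrey_norm Phi phi (\1_A : LT -> R)) +oo.
  by rewrite gt0_muley ?lte_fin ?leey.
have mpsiA : measurable (psi @^-1` A) by rewrite -[_ @^-1` _]setTI; exact: mpsi.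
have indicA_weak : weak_morrey_space Phi phi (\1_A : LT -> R).
  by split; [exact: measurable_indic | rewrite weak_morrey_norm_indic // ltey].
rewrite -weak_morrey_norm_indic // -weak_morrey_norm_indic //.
have -> : (\1_(psi @^-1` A) : LT -> R) = (\1_A : LT -> R) \o psi.
  by apply/funext => x; rewrite /indic /= /preimage.
exact: (bounded _ indicA_weak).2.
Qed.

Lemma preimage_bounded_composition (psi : LT -> LT) :
  measurable_fun [set: LT] psi ->
  morrey_preimage_bounded psi -> composition_bounded Phi phi psi.
Proof.
move=> mpsi [K [K0 preimage_le]]; exists K; split; first exact: K0.
move=> f [mf f_fin]; have comp_le := weak_morrey_norm_comp_le _ _ _ mpsi mf (ltW K0) preimage_le.
split; last exact: comp_le.
split; first exact: measurableT_comp.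
by apply: le_lt_trans comp_le _; rewrite lte_mul_pinfty // lee_fin ltW.
Qed.

End orlicz_morrey_levels.

Theorem theorem1p12 (R : realType) (n : nat) (Phi phi : R -> R)
    (psi : LRn R n -> LRn R n) :
  young_function Phi -> G_dec_1 phi -> measurable_fun [set: LRn R n] psi ->
  (composition_bounded Phi phi psi <->
   exists K : R, 0 < K /\
     forall A : set (LRn R n), measurable A ->
       (morrey_norm Phi phi (\1_(psi @^-1` A) : LRn R n -> R)
          <= K%:E * morrey_norm Phi phi (\1_A : LRn R n -> R))%E).
Proof.
move=> young_Phi [phi_gt0 _ _] mpsi; split.
- exact: composition_bounded_preimage.
- exact: preimage_bounded_composition.
Qed.
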